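(* Let $X=\{x_1,\dots,x_n\}$. Every partial shelling $\sigma_1,\dots,\sigma_m$ of the cross-polytope $O_n$ defines an isometric ordering of the corresponding vertices $c_1,\dots,c_m$ of the cube $2^X$, i.e. each set $\{c_1,\dots,c_j\}$, $1\le j\le m$, is isometric. Conversely, if $C\subseteq 2^X$ is an isometric class, then any ordering $c_1,\dots,c_m$ of $C$ in which every set $\{c_1,\dots,c_j\}$ is isometric defines (via the corresponding facets) a partial shelling of $O_n$.
   Context: Let $\pm X=\{+x_1,-x_1,\dots,+x_n,-x_n\}$. The $n$-dimensional cross-polytope $O_n$ is the simplicial complex on $\pm X$ whose facets are the $2^n$ sets $\sigma\subseteq\pm X$ containing exactly one of $+x_i,-x_i$ for each $i$. Facets correspond bijectively to subsets $c\subseteq X$ via $c=\{x_i:+x_i\in\sigma\}$. A partial shelling of $O_n$ is a sequence $\sigma_1,\dots,\sigma_m$ of distinct facets such that for every $2\le j\le m$, the family $2^{\sigma_j}\cap\bigcup_{i<j}2^{\sigma_i}$ is a pure simplicial complex whose inclusion-maximal sets all have size $n-1$ (equivalently: for all $i<j$ there is $k<j$ with $\sigma_i\cap\sigma_j\subseteq\sigma_k\cap\sigma_j$ and $|\sigma_k\cap\sigma_j|=n-1$). A class $C\subseteq 2^X$ is isometric if the graph on $C$ joining sets at Hamming distance $1$ is connected and its graph distance equals the Hamming distance $|c\Delta c'|$ for all $c,c'\in C$. *)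

From mathcomp Require Import all_boot.
Set Implicit Arguments. Unset Strict Implicit. Unset Printing Implicit Defensive.

(* X = {x_1,...,x_n} is modelled by 'I_n; the signed vertex set
   +-X by 'I_n * bool, where (i, true) = +x_i and (i, false) = -x_i. *)
Notation vtx n := ('I_n * bool)%type.

Definition is_facet n (sigma : {set vtx n}) : Prop :=
  forall i : 'I_n, ((i, true) \in sigma) (+) ((i, false) \in sigma).

(* Bijection facets <-> subsets of X. *)
Definition vertex_of n (sigma : {set vtx n}) : {set 'I_n} :=
  [set i | (i, true) \in sigma].
Definition facet_of n (c : {set 'I_n}) : {set vtx n} :=
  [set v | v.2 == (v.1 \in c)].

(* The complex 2^{sigma_j} cap U_{i<j} 2^{sigma_i}, for sigma_j = nth s j. *)
Definition prev_cplx n (s : seq {set vtx n}) (j : nat) (tau : {set vtx n}) : Prop :=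
  tau \subset nth set0 s j /\ exists2 i, i < j & tau \subset nth set0 s i.

Definition shelling_step n (s : seq {set vtx n}) (j : nat) : Prop :=
  forall tau, prev_cplx s j tau ->
    (forall tau', prev_cplx s j tau' -> tau \subset tau' -> tau' = tau) ->
    #|tau| = n.-1.

(* Partial shelling: distinct facets, and the condition for every 2 <= j <= m
   (0-based index j with 1 <= j < m). *)
Definition partial_shelling n (s : seq {set vtx n}) : Prop :=
  uniq s /\ (forall sigma, sigma \in s -> is_facet sigma) /\
  (forall j, 0 < j < size s -> shelling_step s j).

Definition hamming n (c c' : {set 'I_n}) : nat := #|(c :\: c') :|: (c' :\: c)|.
Definition adj n (c c' : {set 'I_n}) : bool := hamming c c' == 1.

Definition gpath n (C : {set {set 'I_n}}) (c c' : {set 'I_n}) (p : seq {set 'I_n}) : Prop :=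
  path (@adj n) c p /\ last c p = c' /\ all (fun x => x \in C) p.

Definition connected_cls n (C : {set {set 'I_n}}) : Prop :=
  forall c c', c \in C -> c' \in C -> exists p, gpath C c c' p.

Definition gdist_is n (C : {set {set 'I_n}}) (c c' : {set 'I_n}) (d : nat) : Prop :=
  (exists p, gpath C c c' p /\ size p = d) /\
  (forall p, gpath C c c' p -> d <= size p).

Definition isometric n (C : {set {set 'I_n}}) : Prop :=
  connected_cls C /\
  forall c c', c \in C -> c' \in C -> gdist_is C c c' (hamming c c').

From mathcomp Require Import all_boot zify.

(* Identify the facet sigma_c of O_n with the cube vertex c.  Then
   |sigma_c cap sigma_d| = n - |c Delta d|, and for a neighbour e of c the
   inclusion sigma_c cap sigma_d <= sigma_e holds iff e is closer to d
   than c is, i.e. e lies on a geodesic from c to d.  So the shelling condition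
   for sigma_j says exactly: for every i < j some earlier neighbour c_k of c_j
   is closer to c_i (take a maximal face of the previous complex containing
   sigma_j cap sigma_i; it has size n - 1, hence is sigma_j cap sigma_k).
   This same ordering condition follows from isometry of {c_1, ..., c_(j+1)}
   (take the first step of a geodesic from c_j to c_i), and conversely builds,
   by induction on j, a geodesic inside {c_1, ..., c_j} between any two of its
   elements. *)

Set Implicit Arguments. Unset Strict Implicit. Unset Printing Implicit Defensive.

Lemma mem_nth_take (T : eqType) (x0 : T) (s : seq T) i j :
  i < j -> i < size s -> nth x0 s i \in take j s.
Proof. by move=> ij i_lt; rewrite -(nth_take x0 ij) mem_nth // size_take_min leq_min ij. Qed.

Lemma mem_take_nth (T : eqType) (x0 : T) (s : seq T) j x :
  x \in take j s -> exists2 i, i < j & x = nth x0 s i.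
Proof. by move=> xs; exists (index x s); rewrite ?index_ltn ?nth_index ?(mem_take xs). Qed.

Section Cube.
Variable n : nat.
Implicit Types (c d e : {set 'I_n}) (C : {set {set 'I_n}}).

Definition symdiff c d := [set i | (i \in c) != (i \in d)].

Lemma hammingE c d : hamming c d = #|symdiff c d|.
Proof. by apply: eq_card => i; rewrite !inE; case: (i \in c); case: (i \in d). Qed.

Lemma hammingC c d : hamming c d = hamming d c.
Proof. by rewrite /hamming setUC. Qed.

Lemma adjC c d : adj c d = adj d c.
Proof. by rewrite /adj hammingC. Qed.

Lemma hamming_eq0 c d : (hamming c d == 0) = (c == d).
Proof.
rewrite hammingE cards_eq0; apply/eqP/eqP => [/setP cd | ->].
  by apply/setP => i; have := cd i; rewrite !inE; case: (i \in c); case: (i \in d).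
by apply/setP => i; rewrite !inE eqxx.
Qed.

Lemma hammingxx c : hamming c c = 0.
Proof. by apply/eqP; rewrite hamming_eq0. Qed.

Lemma hamming_triangle c d e : hamming c e <= hamming c d + hamming d e.
Proof.
rewrite !hammingE; apply: leq_trans (leq_card_setU _ _).1.
apply: subset_leq_card; apply/subsetP => i; rewrite !inE.
by case: (i \in c); case: (i \in d); case: (i \in e).
Qed.

Lemma adj_closer c d e :
  adj c e -> hamming e d < hamming c d -> hamming c d = (hamming e d).+1.
Proof. by move=> /eqP ce lt; have := hamming_triangle c e d; rewrite ce; lia. Qed.

Lemma adj_symdiff_sub c d e : adj c e ->
  (symdiff c e \subset symdiff c d) = (hamming e d < hamming c d).
Proof.
rewrite /adj hammingE => /cards1P[x cex].
have ed i : (i \in symdiff e d) = (i \in symdiff c d) (+) (i == x).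
  have /setP/(_ i) := cex; rewrite !inE.
  by case: (i \in c); case: (i \in d); case: (i \in e); case: (i == x).
rewrite cex sub1set !hammingE; set A := symdiff c d in ed *.
have [xA | xA] := boolP (x \in A).
- have -> : symdiff e d = A :\ x.
    by apply/setP => i; rewrite ed in_setD1; case: (i =P x) => [->|_]; rewrite ?xA ?addbF.
  by rewrite (cardsD1 x A) xA add1n ltnSn.
- have -> : symdiff e d = x |: A.
    by apply/setP => i; rewrite ed in_setU1; case: (i =P x) => [->|_]; rewrite ?(negbTE xA) ?addbF.
  by rewrite cardsU1 xA ltnNge leq_addl.
Qed.

Lemma path_size_ge c p : path (@adj n) c p -> hamming c (last c p) <= size p.
Proof.
elim: p c => [|x p IH] c /=; first by rewrite hammingxx.
by case/andP=> /eqP cx /IH; have := hamming_triangle c x (last x p); rewrite cx; lia.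
Qed.

Lemma facet_ofK : cancel (@facet_of n) (@vertex_of n).
Proof. by move=> c; apply/setP => i; rewrite !inE /=; case: (i \in c). Qed.

Lemma facet_of_is_facet c : is_facet (facet_of c).
Proof. by move=> i; rewrite !inE /=; case: (i \in c). Qed.

Lemma vertex_ofK (sigma : {set vtx n}) :
  is_facet sigma -> facet_of (vertex_of sigma) = sigma.
Proof.
move=> facet; apply/setP => [[i b]]; rewrite !inE /=.
by have := facet i; case: b; case: ((i, true) \in sigma); case: ((i, false) \in sigma).
Qed.

Lemma card_facetI c d : #|facet_of c :&: facet_of d| + hamming c d = n.
Proof.
have -> : facet_of c :&: facet_of d = (fun i => (i, i \in c)) @: ~: symdiff c d.
  apply/setP => [[i b]]; rewrite !inE /=; apply/idP/imsetP.
  - by move=> /andP[/eqP -> /eqP cd]; exists i; rewrite // !inE cd eqxx.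
  - case=> j + [-> ->]; rewrite !inE /= eqxx.
    by case: (j \in c); case: (j \in d).
by rewrite card_imset => [|i j []]; rewrite // hammingE addnC cardsC card_ord.
Qed.

Lemma facetI_sub c d e :
  (facet_of c :&: facet_of d \subset facet_of e) = (symdiff c e \subset symdiff c d).
Proof.
apply/subsetP/subsetP => [cde i | cde [i b]]; rewrite !inE.
- apply: contraNN => /eqP cd.
  by have := cde (i, i \in c); rewrite !inE /= -cd eqxx => /(_ erefl).
- move=> /andP[/eqP bc /eqP bd]; rewrite bc; apply/eqP.
  by have := cde i; rewrite !inE -bc bd eqxx => /contraNN/(_ erefl)/negPn/eqP.
Qed.

Lemma adj_facetI_sub c d e : adj c e ->
  (facet_of c :&: facet_of d \subset facet_of e) = (hamming e d < hamming c d).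
Proof. by move=> ce; rewrite facetI_sub adj_symdiff_sub. Qed.

Lemma gpath_cons C c c' x p :
  adj c x -> x \in C -> gpath C x c' p -> gpath C c c' (x :: p).
Proof. by move=> cx xC [px [lx allp]]; split; rewrite /= ?cx ?xC. Qed.

Lemma gpath_rcons C c c' x p :
  gpath C c x p -> adj x c' -> c' \in C -> gpath C c c' (rcons p c').
Proof.
move=> [pc [<- allp]] xc' c'C.
by rewrite /gpath rcons_path pc xc' last_rcons all_rcons c'C allp.
Qed.

Lemma gpath_subset C C' c c' p :
  {subset C <= C'} -> gpath C c c' p -> gpath C' c c' p.
Proof. by move=> CC' [pc [lc allp]]; split => //; split => //; apply: sub_all allp. Qed.

Lemma isometricP C : isometric C <->
  (forall c c', c \in C -> c' \in C ->
     exists2 p, gpath C c c' p & size p = hamming c c').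
Proof.
split => [[_ dist] c c' cC c'C | geo].
  by have [[p [pc sz]] _] := dist c c' cC c'C; exists p.
split => [c c' cC c'C | c c' cC c'C]; first by have [p pc _] := geo c c' cC c'C; exists p.
have [p pc sz] := geo c c' cC c'C; split; first by exists p.
by move=> q [qc [<- _]]; apply: path_size_ge.
Qed.

End Cube.

Lemma prev_cplx_maximal n (s : seq {set vtx n}) j tau : prev_cplx s j tau ->
  exists2 tau' : {set vtx n}, tau \subset tau' & prev_cplx s j tau' /\
    forall t, prev_cplx s j t -> tau' \subset t -> t = tau'.
Proof.
pose P (t : {set vtx n}) :=
  (t \subset nth set0 s j) && [exists i : 'I_j, t \subset nth set0 s i].
have prevP t : prev_cplx s j t <-> P t.
  split => [[tj [i ij ti]] | /andP[tj /existsP[i ti]]].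
    by rewrite /P tj; apply/existsP; exists (Ordinal ij).
  by split => //; exists i.
move=> /prevP Ptau; have [tau' /maxsetP[Ptau' tau'_max] sub] := maxset_exists Ptau.
by exists tau' => //; split => [|t /prevP]; [apply/prevP | apply: tau'_max].
Qed.

Section Orderings.
Variables (n : nat) (cs : seq {set 'I_n}).
Local Notation c_ a := (nth set0 cs a).

Definition geodesic_ordering : Prop :=
  forall i j, i < j -> j < size cs -> exists2 k, k < j &
    adj (c_ j) (c_ k) /\ hamming (c_ k) (c_ i) < hamming (c_ j) (c_ i).

Lemma nth_in_prefix k j : k < j -> j <= size cs -> c_ k \in [set c in take j cs].
Proof. by move=> kj js; rewrite inE mem_nth_take // (leq_trans kj js). Qed.

Lemma geodesic_in_prefix j a b : geodesic_ordering ->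
  j <= size cs -> a < j -> b < j ->
  exists2 p, gpath [set c in take j cs] (c_ a) (c_ b) p & size p = hamming (c_ a) (c_ b).
Proof.
move=> geo; elim: j a b => // j IH a b js.
have IHj a' b' : a' < j -> b' < j ->
    exists2 p, gpath [set c in take j.+1 cs] (c_ a') (c_ b') p
             & size p = hamming (c_ a') (c_ b').
  move=> a'j b'j; have [p pc sz] := IH a' b' (ltnW js) a'j b'j.
  exists p => //; apply: gpath_subset pc => c; rewrite !inE.
  by rewrite -(take_takel cs (leqnSn j)) => /mem_take.
rewrite ltnS leq_eqVlt => /predU1P[-> | aj]; rewrite ltnS leq_eqVlt => /predU1P[-> | bj].
- by exists [::]; rewrite ?hammingxx.
- have [k kj [jk closer]] := geo b j bj js.
  have [p pc sz] := IHj k b kj bj.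
  exists (c_ k :: p); first exact: gpath_cons jk (nth_in_prefix (leqW kj) js) pc.
  by rewrite /= sz (adj_closer jk closer).
- have [k kj [jk closer]] := geo a j aj js.
  have [p pc sz] := IHj a k aj kj.
  exists (rcons p (c_ j)); first by apply: gpath_rcons pc _ (nth_in_prefix (ltnSn j) js); rewrite adjC.
  by rewrite size_rcons sz (hammingC (c_ a) (c_ j)) (adj_closer jk closer) hammingC.
- exact: IHj.
Qed.

Lemma geodesic_ordering_isometric j : geodesic_ordering ->
  j <= size cs -> isometric [set c in take j cs].
Proof.
move=> geo js; apply/isometricP => c c'; rewrite !inE.
move=> /(mem_take_nth set0)[a aj ->] /(mem_take_nth set0)[b bj ->].
exact: geodesic_in_prefix.
Qed.

Lemma isometric_prefixes_geodesic_ordering : uniq cs ->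
  (forall j, 1 <= j <= size cs -> isometric [set c in take j cs]) ->
  geodesic_ordering.
Proof.
move=> cs_uniq iso i j ij js.
have i_size := ltn_trans ij js.
have /isometricP geo := iso j.+1 js.
have [p [pc [lc allp]] sz] :=
  geo (c_ j) (c_ i) (nth_in_prefix (ltnSn j) js) (nth_in_prefix (leqW ij) js).
case: p pc lc allp sz => [_ /= /eqP | x p /= /andP[jx pc] lc /andP[+ _] sz].
  by rewrite nth_uniq // gtn_eqF.
rewrite inE => /(mem_take_nth set0)[k kj xk].
exists k; last by rewrite -xk -sz ltnS -lc; split => //; apply: path_size_ge.
rewrite ltn_neqAle -ltnS kj andbT; apply: contraTneq jx => kj'.
by rewrite xk kj' /adj hammingxx.
Qed.

Lemma shelling_geodesic_ordering :
  partial_shelling (map (@facet_of n) cs) -> geodesic_ordering.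
Proof.
case=> s_uniq [_ steps] i j ij js.
have i_size := ltn_trans ij js.
have prev_ji : prev_cplx (map (@facet_of n) cs) j (facet_of (c_ j) :&: facet_of (c_ i)).
  split; first by rewrite (nth_map set0) // subsetIl.
  by exists i; rewrite // (nth_map set0) // subsetIr.
have [tau sub [[tauj [k kj tauk]] tau_max]] := prev_cplx_maximal prev_ji.
have card_tau : #|tau| = n.-1.
  apply: (steps j) => //; last by split => //; exists k.
  by rewrite size_map js andbT (leq_ltn_trans (leq0n i) ij).
have k_size := ltn_trans kj js.
rewrite !(nth_map set0) // in tauj tauk.
exists k => //.
have jk : adj (c_ j) (c_ k).
  have : #|tau| <= #|facet_of (c_ j) :&: facet_of (c_ k)|.
    by apply: subset_leq_card; rewrite subsetI tauj tauk.
  have := card_facetI (c_ j) (c_ k).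
  have : hamming (c_ j) (c_ k) != 0.
    by rewrite hamming_eq0 nth_uniq ?(map_uniq s_uniq) // gtn_eqF.
  by rewrite /adj; lia.
by split => //; rewrite -adj_facetI_sub //; apply: subset_trans sub tauk.
Qed.

Lemma geodesic_ordering_shelling : uniq cs -> geodesic_ordering ->
  partial_shelling (map (@facet_of n) cs).
Proof.
move=> cs_uniq geo; split; first by rewrite (map_inj_uniq (can_inj (@facet_ofK n))).
split; first by move=> _ /mapP[c _ ->]; apply: facet_of_is_facet.
move=> j /andP[_ js] tau [tauj [i ij taui]] tau_max; rewrite size_map in js.
have i_size := ltn_trans ij js.
have [k kj [jk closer]] := geo i j ij js.
have k_size := ltn_trans kj js.
rewrite !(nth_map set0) // in tauj taui.
have prev_jk : prev_cplx (map (@facet_of n) cs) j (facet_of (c_ j) :&: facet_of (c_ k)).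
  split; first by rewrite (nth_map set0) // subsetIl.
  by exists k; rewrite // (nth_map set0) // subsetIr.
have sub : tau \subset facet_of (c_ j) :&: facet_of (c_ k).
  rewrite subsetI tauj; apply: subset_trans (_ : _ \subset facet_of (c_ j) :&: facet_of (c_ i)) _.
    by rewrite subsetI tauj taui.
  by rewrite adj_facetI_sub.
rewrite -(tau_max _ prev_jk sub).
by have := card_facetI (c_ j) (c_ k); rewrite (eqP jk); lia.
Qed.

End Orderings.

Theorem proposition4p3 (n : nat) :
  (forall s : seq {set vtx n}, partial_shelling s ->
     forall j, 1 <= j <= size s ->
       isometric [set c in take j (map (@vertex_of n) s)]) /\
  (forall (C : {set {set 'I_n}}), isometric C ->
     forall cs : seq {set 'I_n}, uniq cs -> (forall c, c \in C = (c \in cs)) ->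
       (forall j, 1 <= j <= size cs -> isometric [set c in take j cs]) ->
       partial_shelling (map (@facet_of n) cs)).
Proof.
split.
- move=> s shelling j /andP[_ js].
  have s_facets : map (@facet_of n) (map (@vertex_of n) s) = s.
    rewrite -map_comp; apply: map_id_in => sigma /shelling.2.1.
    exact: vertex_ofK.
  apply: geodesic_ordering_isometric; last by rewrite size_map.
  by apply: shelling_geodesic_ordering; rewrite s_facets.
- move=> C _ cs cs_uniq _ iso.
  exact: geodesic_ordering_shelling (isometric_prefixes_geodesic_ordering cs_uniq iso).
Qed.
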